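(* A skew lattice $S$ is a left distributive solution of the Yang–Baxter equation if and only if it satisfies the identity \[ ((y\vee x)\wedge z)\vee(x\wedge y)=((y\wedge z)\vee x)\wedge(z\vee y)\quad\text{for all }x,y,z\in S. \] In particular, left distributive solutions form a variety of skew lattices.
   Context: A skew lattice is a set $S$ with two binary operations $\wedge,\vee$, each idempotent and associative, satisfying the absorption laws $x\wedge(x\vee y)=x=x\vee(x\wedge y)$ and $(x\wedge y)\vee y=y=(x\vee y)\wedge y$ for all $x,y\in S$. $S$ is a left distributive solution if $r_L:S\times S\to S\times S$, $r_L(x,y)=(x\wedge y,y\vee x)$, satisfies $(r_L\times\mathrm{id})\circ(\mathrm{id}\times r_L)\circ(r_L\times\mathrm{id})=(\mathrm{id}\times r_L)\circ(r_L\times\mathrm{id})\circ(\mathrm{id}\times r_L)$. *)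

Definition is_skew_lattice {S : Type} (meet join : S -> S -> S) : Prop :=
  (forall x, meet x x = x) /\ (forall x, join x x = x) /\
  (forall x y z, meet x (meet y z) = meet (meet x y) z) /\
  (forall x y z, join x (join y z) = join (join x y) z) /\
  (forall x y, meet x (join x y) = x) /\
  (forall x y, join x (meet x y) = x) /\
  (forall x y, join (meet x y) y = y) /\
  (forall x y, meet (join x y) y = y).

Definition rL {S : Type} (meet join : S -> S -> S) (p : S * S) : S * S :=
  (meet (fst p) (snd p), join (snd p) (fst p)).

Definition r12 {S : Type} (r : S * S -> S * S) (t : S * S * S) : S * S * S :=
  let '(x, y, z) := t in let '(a, b) := r (x, y) in (a, b, z).

Definition r23 {S : Type} (r : S * S -> S * S) (t : S * S * S) : S * S * S :=
  let '(x, y, z) := t in let '(b, c) := r (y, z) in (x, b, c).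

Definition is_YBE_solution {S : Type} (r : S * S -> S * S) : Prop :=
  forall t : S * S * S, r12 r (r23 r (r12 r t)) = r23 r (r12 r (r23 r t)).

Definition left_distributive_solution {S : Type} (meet join : S -> S -> S) : Prop :=
  is_YBE_solution (rL meet join).


(* Applying both sides of the braid equation for
   r_L(x,y) = (x /\ y, y \/ x) to a triple (x,y,z) gives the triples
     ((x/\y) /\ ((y\/x) /\ z), ((y\/x) /\ z) \/ (x/\y), z \/ (y\/x))  and
     (x /\ (y/\z), ((y/\z) \/ x) /\ (z\/y), (z\/y) \/ ((y/\z) \/ x)).
   The braid equation is thus equivalent to three families of identities,
   one per component ([rL_braid_at_iff]).  The outer two hold in every skew
   lattice: after reassociating they reduce to the absorption laws
   y /\ (y \/ x) = y and y \/ (y /\ z) = y ([braid_first_component],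
   [braid_third_component]).  Hence r_L is a solution exactly when the
   middle identity holds, which is the identity of the theorem. *)

Lemma rL_braid_at_iff {S : Type} (meet join : S -> S -> S) (x y z : S) :
  r12 (rL meet join) (r23 (rL meet join) (r12 (rL meet join) (x, y, z))) =
  r23 (rL meet join) (r12 (rL meet join) (r23 (rL meet join) (x, y, z))) <->
  meet (meet x y) (meet (join y x) z) = meet x (meet y z) /\
  join (meet (join y x) z) (meet x y) = meet (join (meet y z) x) (join z y) /\
  join z (join y x) = join (join z y) (join (meet y z) x).
Proof.
  unfold r12, r23, rL; simpl.
  split.
  - intros H; injection H; intros E3 E2 E1; auto.
  - intros [E1 [E2 E3]]; rewrite E1, E2, E3; reflexivity.
Qed.

Section SkewLatticeBraid.

Variable S : Type.
Variables meet join : S -> S -> S.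

Hypothesis meet_assoc : forall x y z, meet x (meet y z) = meet (meet x y) z.
Hypothesis join_assoc : forall x y z, join x (join y z) = join (join x y) z.
Hypothesis meet_join_absorb : forall x y, meet x (join x y) = x.
Hypothesis join_meet_absorb : forall x y, join x (meet x y) = x.

Lemma braid_first_component (x y z : S) :
  meet (meet x y) (meet (join y x) z) = meet x (meet y z).
Proof.
  rewrite <- meet_assoc, (meet_assoc y (join y x) z), meet_join_absorb.
  reflexivity.
Qed.

Lemma braid_third_component (x y z : S) :
  join z (join y x) = join (join z y) (join (meet y z) x).
Proof.
  rewrite (join_assoc (join z y) (meet y z) x), <- (join_assoc z y (meet y z)),
    join_meet_absorb, join_assoc.
  reflexivity.
Qed.

End SkewLatticeBraid.

Theorem mainTheorem10 (S : Type) (meet join : S -> S -> S)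
  (HS : is_skew_lattice meet join) :
  left_distributive_solution meet join <->
  (forall x y z : S,
     join (meet (join y x) z) (meet x y) = meet (join (meet y z) x) (join z y)).
Proof.
  destruct HS as [_ [_ [meet_assoc [join_assoc [meet_join_absorb
    [join_meet_absorb _]]]]]].
  split.
  - intros Hybe x y z.
    apply (rL_braid_at_iff meet join x y z), Hybe.
  - intros Hmid [[x y] z].
    apply rL_braid_at_iff; repeat split.
    + apply braid_first_component; assumption.
    + apply Hmid.
    + apply braid_third_component; assumption.
Qed.
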